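(* Let $k\ge2$ and let $\mathcal C_1$ be the binary code with generator matrix $[I_k\ \tilde G_k]$. Then $\mathcal C_1$ has the Easy Repair Property.
   Context: $\tilde G_k$ denotes the $k\times\frac{k(k-1)}{2}$ binary matrix whose columns are all vectors of $\mathbb F_2^k$ of Hamming weight $2$. Let $g_1,\dots,g_n$ ($n=\frac{k(k+1)}2$) be the columns of $[I_k\ \tilde G_k]$; nodes are coordinates $c_1,\dots,c_n$ of codewords $c=u[I_k\ \tilde G_k]$. An erasure pattern is a set $S^e$ of erased nodes; the others are live. It is correctable if no two distinct codewords coincide on all live positions. A node $c_i$ is related to distinct nodes $c_{j_1},\dots,c_{j_\gamma}$ (all different from $c_i$) if $g_i=g_{j_1}+\dots+g_{j_\gamma}$. An erased node allows for easy repair if it is related to $\gamma\le2$ live nodes. An erasure pattern allows for easy repair if all erased nodes can be recovered by a sequence of easy repairs, where after each step the recovered node is regarded as live. A code has the Easy Repair Property if every correctable erasure pattern allows for easy repair. *)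

From mathcomp Require Import all_boot all_order all_algebra.
Set Implicit Arguments. Unset Strict Implicit. Unset Printing Implicit Defensive.
Import GRing.Theory.
Local Open Scope ring_scope.

Section Generic.
(* A binary linear code given by generator columns g i : F_2^k (as row vectors),
   indexed by a finite type I of nodes. *)
Variables (I : finType) (k : nat) (g : I -> 'rV['F_2]_k).

Definition codeword (u : 'rV['F_2]_k) (i : I) : 'F_2 := (u *m (g i)^T) 0 0.

Definition correctable (E : {set I}) : Prop :=
  forall u v : 'rV['F_2]_k,
    (forall i, i \notin E -> codeword u i = codeword v i) ->
    forall i, codeword u i = codeword v i.

Definition related (i : I) (S : {set I}) : Prop :=
  i \notin S /\ (0 < #|S|)%N /\ g i = \sum_(j in S) g j.

Definition easy_node (E : {set I}) (i : I) : Prop :=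
  i \in E /\ exists S : {set I}, [/\ S \subset ~: E, (#|S| <= 2)%N & related i S].

Inductive easy_repairable : {set I} -> Prop :=
| ER_done : easy_repairable set0
| ER_step E i : easy_node E i -> easy_repairable (E :\ i) -> easy_repairable E.

Definition easy_repair_property : Prop :=
  forall E : {set I}, correctable E -> easy_repairable E.

End Generic.

(* Nodes of C_1 = [I_k  G~_k]: first the k unit columns, then one column for each
   2-subset of 'I_k (i.e. each weight-2 vector of F_2^k). *)
Definition C1_node (k : nat) : finType :=
  ('I_k + {A : {set 'I_k} | #|A| == 2%N})%type.

Definition C1_col (k : nat) (x : C1_node k) : 'rV['F_2]_k :=
  match x with
  | inl i => \row_j (j == i)%:R
  | inr A => \row_j (j \in val A)%:R
  end.

(* View C_1 as the cycle code of the complete graph on the k + 1 vertices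
   {None} ∪ 'I_k: the unit column e_i is the edge {None, i}, the weight-2
   column e_i + e_j the edge {i, j}, and the coordinate of u G on an edge is
   the sum of the values of u at its endpoints (with value 0 at None).  If the
   endpoints of an erased edge were not joined by a path of live edges, the
   indicator of the live component of one endpoint would give a nonzero
   codeword vanishing on all live edges; so in a correctable pattern they are.
   Collapse such a path edge by edge: two consecutive live edges x-v-y either
   have a live chord {x, y}, which shortens the path, or an erased one, which
   is then an easy repair through v.  Repairing it keeps the pattern
   correctable, and induction on the number of erasures finishes the proof. *)

From mathcomp Require Import all_boot all_order all_algebra.
Set Implicit Arguments. Unset Strict Implicit. Unset Printing Implicit Defensive.
Import GRing.Theory.
Local Open Scope ring_scope.

Lemma correctable_subset (I : finType) (k : nat) (g : I -> 'rV['F_2]_k)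
    (E F : {set I}) :
  F \subset E -> correctable g E -> correctable g F.
Proof.
move=> sFE hE u v eq_live; apply: hE => i iNE; apply: eq_live.
by apply: contra iNE; apply: (subsetP sFE).
Qed.

Lemma perm_index_enum_option (T : finType) :
  perm_eq (index_enum (option T)) (None :: map Some (index_enum T)).
Proof.
apply: uniq_perm; first exact: index_enum_uniq.
  rewrite /= (map_inj_uniq (@Some_inj _)) index_enum_uniq andbT.
  by apply/mapP => -[].
case=> [x|]; rewrite mem_index_enum ?inE //.
by rewrite (mem_map (@Some_inj _)) mem_index_enum.
Qed.

Lemma sum_option (R : nmodType) (T : finType) (F : option T -> R) :
  \sum_v F v = F None + \sum_j F (Some j).
Proof. by rewrite (perm_big _ (perm_index_enum_option T)) big_cons big_map. Qed.

Lemma F2_addrr (x : 'F_2) : x + x = 0.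
Proof. exact/addrr_pchar2/pchar_Fp. Qed.

Section CompleteGraph.

Variable k : nat.

Implicit Types (E : {set C1_node k}) (n m : C1_node k) (x y v : option 'I_k).

Definition C1_ends n : {set option 'I_k} :=
  match n with
  | inl i => [set None; Some i]
  | inr A => Some @: val A
  end.

Lemma C1_endsP n : exists x y, x != y /\ C1_ends n = [set x; y].
Proof.
case: n => [i|[A /= /cards2P[a [b [ab ->]]]]] /=.
  by exists None, (Some i).
by exists (Some a), (Some b); rewrite imsetU1 imset_set1.
Qed.

Lemma C1_ends_neq n x y : C1_ends n = [set x; y] -> x != y.
Proof.
move=> ends_n; apply/negP => /eqP xy; have [a [b [ab ends_n']]] := C1_endsP n.
by move: (cards2 a b); rewrite ab -ends_n' ends_n xy setUid cards1.
Qed.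

Lemma C1_ends_inj : injective C1_ends.
Proof.
have NoneNSome (A : {set 'I_k}) : None \notin Some @: A by apply/imsetP => -[].
case=> [i|[A hA]] [j|[B hB]] /= ends_eq.
- have : Some i \in [set None; Some j] by rewrite -ends_eq !inE eqxx orbT.
  by rewrite !inE => /orP[//|/eqP[->]].
- by have := NoneNSome B; rewrite -ends_eq !inE.
- by have := NoneNSome A; rewrite ends_eq !inE.
- have eqAB : A = B by apply: (imset_inj (@Some_inj _)).
  by subst B; congr inr; apply: val_inj.
Qed.

Lemma C1_ends_surj x y : x != y -> exists n, C1_ends n = [set x; y].
Proof.
case: x y => [i|] [j|] //= xy.
- have hA : #|[set i; j]| == 2%N by rewrite cards2 xy.
  by exists (inr (exist _ [set i; j] hA)); rewrite /= imsetU1 imset_set1.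
- by exists (inl i); rewrite setUC.
- by exists (inl j).
Qed.

Lemma C1_col_ends n : C1_col n = \row_j (Some j \in C1_ends n)%:R.
Proof.
apply/rowP => j; case: n => [i|[A hA]]; rewrite !mxE /= ?inE //.
by rewrite (mem_imset _ _ (@Some_inj _)).
Qed.

Definition vertex_value (u : 'rV['F_2]_k) v : 'F_2 :=
  if v is Some j then u 0 j else 0.

Lemma codeword_C1 u n :
  codeword (@C1_col k) u n = \sum_(v in C1_ends n) vertex_value u v.
Proof.
rewrite /codeword C1_col_ends mxE [RHS]big_mkcond sum_option /= if_same add0r.
by apply: eq_bigr => j _; rewrite !mxE; case: ifP; rewrite ?mulr1 ?mulr0.
Qed.

Lemma codeword_edge u n x y :
  C1_ends n = [set x; y] ->
  codeword (@C1_col k) u n = vertex_value u x + vertex_value u y.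
Proof.
move=> ends_n; have xy := C1_ends_neq ends_n.
by rewrite codeword_C1 ends_n big_setU1 ?big_set1 // inE.
Qed.

Definition live E : rel (option 'I_k) :=
  fun x y => [exists n, (n \notin E) && (C1_ends n == [set x; y])].

Lemma liveC E : symmetric (live E).
Proof. by move=> x y; rewrite /live setUC. Qed.

Lemma erased_edge_not_live E n x y :
  n \in E -> C1_ends n = [set x; y] -> ~~ live E x y.
Proof.
move=> nE ends_n; apply/existsP => -[m /andP[mNE /eqP ends_m]].
by move: mNE; rewrite (C1_ends_inj (etrans ends_m (esym ends_n))) nE.
Qed.

Lemma correctable_connect E n x y :
  correctable (@C1_col k) E -> n \in E -> C1_ends n = [set x; y] ->
  connect (live E) x y.
Proof.
move=> hE nE ends_n.
pose C := connect (live E) x.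
pose u := \row_j ((C (Some j))%:R + (C None)%:R) : 'rV['F_2]_k.
have value_u v : vertex_value u v = (C v)%:R + (C None)%:R.
  by case: v => [j|]; rewrite /= ?mxE ?F2_addrr.
have codeword_u m a b :
    C1_ends m = [set a; b] -> codeword (@C1_col k) u m = (C a)%:R + (C b)%:R.
  move=> ends_m; rewrite (codeword_edge _ ends_m) !value_u.
  by rewrite addrACA F2_addrr addr0.
have codeword0 m : codeword (@C1_col k) 0 m = 0 by rewrite /codeword mul0mx mxE.
have u_live m :
    m \notin E -> codeword (@C1_col k) u m = codeword (@C1_col k) 0 m.
  move=> mNE; have [a [b [_ ends_m]]] := C1_endsP m.
  have ab : live E a b by apply/existsP; exists m; rewrite mNE ends_m eqxx.
  rewrite codeword0 (codeword_u _ _ _ ends_m).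
  by rewrite /C (same_connect1r (sym_connect_sym (liveC E)) ab) F2_addrr.
move: (hE u 0 u_live n).
rewrite codeword0 (codeword_u _ _ _ ends_n) /C connect0.
by case: (connect _ x y) => //; rewrite addr0 => /eqP; rewrite oner_eq0.
Qed.

Lemma easy_triangle E n x v y :
  n \in E -> C1_ends n = [set x; y] -> live E x v -> live E v y ->
  easy_node (@C1_col k) E n.
Proof.
move=> nE ends_n /existsP[m1 /andP[m1NE /eqP ends_m1]].
move=> /existsP[m2 /andP[m2NE /eqP ends_m2]].
have xy := C1_ends_neq ends_n.
have xv := C1_ends_neq ends_m1; have vy := C1_ends_neq ends_m2.
have m12 : m1 != m2.
  apply: contraNneq xy => m12.
  have : x \in [set v; y] by rewrite -ends_m2 -m12 ends_m1 !inE eqxx.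
  by rewrite !inE (negbTE xv).
have col_sum : C1_col n = C1_col m1 + C1_col m2.
  apply/rowP => j; rewrite !C1_col_ends !mxE ends_n ends_m1 ends_m2 !inE.
  case: (eqVneq (Some j) v) => [->|_].
    by rewrite !orbT eq_sym (negbTE xv) (negbTE vy) F2_addrr.
  rewrite orbF; case: (eqVneq (Some j) x) => [->|_]; last by rewrite add0r.
  by rewrite (negbTE xy) addr0.
split=> //; exists [set m1; m2]; split.
- by apply/subsetP => m; rewrite !inE => /orP[]/eqP->.
- by rewrite cards2; case: (m1 != m2).
split; last split.
- rewrite !inE; apply/norP; split; apply/eqP => eq_n.
    by move: m1NE; rewrite -eq_n nE.
  by move: m2NE; rewrite -eq_n nE.
- by rewrite cards2.
by rewrite big_setU1 ?big_set1 ?inE.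
Qed.

Lemma live_chord E x v y :
  live E x v -> live E v y -> x != y ->
  live E x y \/ exists i, easy_node (@C1_col k) E i.
Proof.
move=> xv vy /C1_ends_surj[n ends_n].
have [nE|nNE] := boolP (n \in E).
  by right; exists n; apply: easy_triangle xv vy.
by left; apply/existsP; exists n; rewrite nNE ends_n eqxx.
Qed.

Lemma connect_live E x y :
  connect (live E) x y ->
  [\/ x = y, live E x y | exists i, easy_node (@C1_col k) E i].
Proof.
case/connectP => p; elim: p x => [|v p IH] x /=.
  by move=> _ ->; constructor 1.
case/andP => xv vp /(IH v vp) [<-|vy|easy]; last by constructor 3.
  by constructor 2.
have [->|xy] := eqVneq x y; first by constructor 1.
by case: (live_chord xv vy xy) => [|easy]; [constructor 2 | constructor 3].
Qed.

Lemma erased_node_easy E n :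
  correctable (@C1_col k) E -> n \in E -> exists i, easy_node (@C1_col k) E i.
Proof.
move=> hE nE; have [x [y [xy ends_n]]] := C1_endsP n.
case: (connect_live (correctable_connect hE nE ends_n)) => [xy'|live_xy|//].
  by rewrite xy' eqxx in xy.
by have := erased_edge_not_live nE ends_n; rewrite live_xy.
Qed.

End CompleteGraph.

(* The argument works for every k. *)
Theorem theorem4p3 (k : nat) (hk : (2 <= k)%N) :
  easy_repair_property (@C1_col k).
Proof.
move=> E; have [N] := ubnP #|E|; elim: N E => // N IH E ltEN hE.
have [->|[n nE]] := set_0Vmem E; first exact: ER_done.
have [i easy_i] := erased_node_easy hE nE.
apply: (ER_step easy_i); apply: IH.
  by move: ltEN; rewrite (cardsD1 i) easy_i.1.
exact: correctable_subset (subD1set E i) hE.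
Qed.
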